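(* Consider the multi-level, single-user caching problem described in the context, with $L$ levels, level $i$ having $N_i$ files and $K_i$ users, and cache memory $M\ge 0$. Let \[ H'=\{h\in\{1,\dots,L\}: M<N_h/K_h\},\qquad I'=\{1,\dots,L\}\setminus H'. \] Then the rate \[ R^{\mathrm{SU}}(M)=\sum_{h\in H'}K_h+\max\Big\{\frac{\sum_{i\in I'}N_i}{M}-1,\;0\Big\} \] is achievable (the second term being $0$ when $I'=\emptyset$).
   Context: Multi-level, single-user caching problem. A server holds $\sum_{i=1}^L N_i$ files of $F$ bits each, partitioned into $L$ popularity levels, level $i$ containing $N_i$ files. There are $K=\sum_{i=1}^L K_i$ caches (each $K_i\ge1$), each able to store $MF$ bits, and exactly one user connected to each cache. In a placement phase, before requests are known, arbitrary functions of the files are stored in the caches. In the delivery phase, exactly $K_i$ of the $K$ users request a file from level $i$, for each $i$; which users these are is not known in advance, and each such user may request any file of level $i$. The server sends one broadcast of $RF$ bits heard by all users, and each user must recover its requested file from the broadcast and its cache. A pair $(R,M)$ is achievable if there is a placement-and-delivery strategy with cache memory $M$ that, for every admissible assignment of users to levels and every admissible choice of requested files, uses a broadcast of rate at most $R$ satisfying all requests (with vanishing error probability as $F\to\infty$). Standing assumption: $N_i\ge K_i$ for every level $i$. *)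

From HB Require Import structures.
From mathcomp Require Import all_boot all_order all_algebra.
From mathcomp Require Import reals.
Set Implicit Arguments. Unset Strict Implicit. Unset Printing Implicit Defensive.
Import Order.TTheory GRing.Theory Num.Theory.
Local Open Scope ring_scope.

Definition file_idx (L : nat) (N : 'I_L -> nat) : finType :=
  {i : 'I_L & 'I_(N i)}.

Definition library (L : nat) (N : 'I_L -> nat) (F : nat) : finType :=
  {ffun file_idx N -> F.-tuple bool}.

Definition nusers (L : nat) (Ku : 'I_L -> nat) : nat := (\sum_(i < L) Ku i)%N.

Definition admissible_demand (L : nat) (N Ku : 'I_L -> nat)
    (d : 'I_(nusers Ku) -> file_idx N) : Prop :=
  forall i : 'I_L, #|[pred k | tag (d k) == i]| = Ku i.

(* Error probability (files i.i.d. uniform bits = uniform library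
   realization): fraction of realizations W for which some user fails. *)
Definition error_prob (R : realType) (L : nat) (N Ku : 'I_L -> nat) (F c b : nat)
    (d : 'I_(nusers Ku) -> file_idx N)
    (cache : 'I_(nusers Ku) -> library N F -> c.-tuple bool)
    (enc : library N F -> b.-tuple bool)
    (dec : 'I_(nusers Ku) -> b.-tuple bool -> c.-tuple bool -> F.-tuple bool) : R :=
  (#|[pred W : library N F |
       [exists k, dec k (enc W) (cache k W) != W (d k)]]|)%:R
  / (#|library N F|)%:R.

Definition achievable (R : realType) (L : nat) (N Ku : 'I_L -> nat)
    (M Rt : R) : Prop :=
  forall eps : R, 0 < eps ->
  exists F0 : nat, forall F : nat, (F0 <= F)%N ->
  exists cache : 'I_(nusers Ku) -> library N F ->
                 (Num.truncn (M * F%:R)).-tuple bool,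
  forall d : 'I_(nusers Ku) -> file_idx N, admissible_demand d ->
  exists (enc : library N F -> (Num.truncn ((Rt + eps) * F%:R)).-tuple bool)
         (dec : 'I_(nusers Ku) -> (Num.truncn ((Rt + eps) * F%:R)).-tuple bool ->
                (Num.truncn (M * F%:R)).-tuple bool -> F.-tuple bool),
    error_prob R d cache enc dec <= eps.

(* The rate R^SU(M): H' = {h | M < N_h/K_h}, I' = complement.
   When I' is empty the second term is max(0/M - 1, 0) = 0. *)
Definition R_SU (R : realType) (L : nat) (N Ku : 'I_L -> nat) (M : R) : R :=
  \sum_(h < L | M < (N h)%:R / (Ku h)%:R) (Ku h)%:R
  + Num.max ((\sum_(i < L | ~~ (M < (N i)%:R / (Ku i)%:R)) (N i)%:R) / M - 1) 0.

From HB Require Import structures.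
From mathcomp Require Import all_boot all_order all_algebra.
From mathcomp Require Import reals.
From mathcomp Require Import ring lra.
Import Order.TTheory GRing.Theory Num.Theory.

(* The requested files of the levels h with M < N_h/K_h are broadcast uncoded,
   at cost sum_h K_h F bits.  The T = sum_(i in I') N_i remaining files are
   served to all K users by Maddah-Ali--Niesen coded caching: every file is
   cut into pieces labelled by sets S of users, user k caches the pieces with
   k in S, and for each set U the server sends the XOR of the pieces
   (d_k, U \ k), k in U, from which each k in U recovers its missing piece.
   Sharing the file between the labels of size t and t + 1, in the proportions
   1 - u : u with t + u = K M / T - delta, uses at most M F cache bits, and by
   convexity the coded load is at most (K / (t + u) - 1) F ~ (T / M - 1) F.
   If T <= M, everything in I' is cached.  Decoding is exact, so no error
   ever occurs. *)

Set Implicit Arguments.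
Unset Strict Implicit.
Unset Printing Implicit Defensive.

Definition pad_tuple (n : nat) (s : seq bool) : n.-tuple bool :=
  [tuple nth false s i | i < n].

Lemma pad_tuple_map_inj (T : eqType) (s : seq T) (f g : T -> bool) n :
  (size s <= n)%N -> pad_tuple n (map f s) = pad_tuple n (map g s) ->
  {in s, f =1 g}.
Proof.
move=> le_s_n eq_fg x xs.
have lt_x_n : (index x s < n)%N by apply: leq_trans le_s_n; rewrite index_mem.
have := congr1 (fun v : n.-tuple bool => tnth v (Ordinal lt_x_n)) eq_fg.
by rewrite !tnth_mktuple /= !(nth_map x) ?index_mem // nth_index.
Qed.

(** * Counting user sets *)

Definition copies (t a1 a2 s : nat) : nat := ((s == t) * a1 + (s == t.+1) * a2)%N.

Lemma copies_le t a1 a2 s : (copies t a1 a2 s <= a1 + a2)%N.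
Proof. by rewrite leq_add // -[X in (_ <= X)%N]mul1n leq_mul2r leq_b1 orbT. Qed.

Lemma card_labels K m (Q : pred {set 'I_K}) (h : nat -> nat) :
  (forall s, h s <= m)%N ->
  #|[pred p : {set 'I_K} * 'I_m | Q p.1 && (p.2 < h #|p.1|)%N]|
    = (\sum_(S | Q S) h #|S|)%N.
Proof.
move=> le_h_m; rewrite -sum1_card.
rewrite -(pair_big_dep Q (fun S (j : 'I_m) => (j < h #|S|)%N) (fun _ _ => 1%N)).
by apply: eq_bigr => S _; rewrite (big_ord_narrow (le_h_m _)) sum1_card card_ord.
Qed.

Lemma sum_copies K (Q : pred {set 'I_K}) t a1 a2 :
  (\sum_(S | Q S) copies t a1 a2 #|S|)%N =
  (a1 * #|[pred S | Q S && (#|S| == t)]| + a2 * #|[pred S | Q S && (#|S| == t.+1)]|)%N.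
Proof.
rewrite big_split /= -!sum1_card !big_distrr /= !big_mkcondr /=.
by congr addn; apply: eq_bigr => S _; case: (#|S| == _); rewrite ?mul1n ?muln1 ?mul0n.
Qed.

Lemma card_sets_of_size K s : #|[pred S : {set 'I_K} | #|S| == s]| = 'C(K, s).
Proof.
by rewrite -[in RHS](card_ord K) -card_draws; apply: eq_card => S; rewrite !inE.
Qed.

Lemma card_pieces K m t a1 a2 : (a1 + a2 <= m)%N ->
  #|[pred p : {set 'I_K} * 'I_m | (p.2 < copies t a1 a2 #|p.1|)%N]|
    = (a1 * 'C(K, t) + a2 * 'C(K, t.+1))%N.
Proof.
move=> le_m; rewrite (eq_card (B := [pred p : {set 'I_K} * 'I_m |
                                       predT p.1 && (p.2 < copies t a1 a2 #|p.1|)%N])) //.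
rewrite card_labels ?sum_copies; last by move=> s; apply: leq_trans (copies_le _ _ _ _) le_m.
by rewrite -!(card_sets_of_size K); congr (_ * _ + _ * _)%N; apply: eq_card.
Qed.

Lemma card_sets_of_size_mem K (k : 'I_K) s :
  #|[pred S : {set 'I_K} | (k \in S) && (#|S| == s)]| = ('C(K, s) - 'C(K.-1, s))%N.
Proof.
have card_notin : #|[pred S : {set 'I_K} | (k \notin S) && (#|S| == s)]| = 'C(K.-1, s).
  rewrite -[in RHS](card_ord K) -(cardsC1 k) -cards_draws; apply: eq_card => S.
  rewrite !inE /=; congr andb; apply/idP/subsetP => [kNS x xS|sub].
    by rewrite in_setC1; apply: contraNneq kNS => <-.
  by apply/negP => /sub; rewrite setC11.
have := cardID (fun S : {set 'I_K} => k \in S) [pred S : {set 'I_K} | #|S| == s].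
rewrite card_sets_of_size -card_notin => <-.
rewrite [X in _ = _ + X - _](eq_card (B := [pred S : {set 'I_K} | (k \notin S) && (#|S| == s)])) ?addnK.
  by apply: eq_card => S; rewrite !inE andbC.
by move=> S; rewrite !inE.
Qed.

Lemma mul_bin_sub_pred K s : (K * ('C(K, s) - 'C(K.-1, s)) = s * 'C(K, s))%N.
Proof.
rewrite mulnBr mul_bin_down -mulnBl.
by case: (leqP s K) => [le_sK|lt_Ks]; [rewrite subKn | rewrite bin_small ?muln0].
Qed.

Lemma card_files_of_levels L (N : 'I_L -> nat) (P : pred 'I_L) :
  #|[pred f : file_idx N | P (tag f)]| = (\sum_(i | P i) N i)%N.
Proof.
rewrite -sum1_card (eq_bigr (fun i => \sum_(j : 'I_(N i) | true) 1)%N).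
  by rewrite (sig_big_dep P (fun i _ => true)); apply: eq_bigl => f; rewrite andbT.
by move=> i _; rewrite sum1_card card_ord.
Qed.

Lemma card_demanders L (N Ku : 'I_L -> nat) (P : pred 'I_L)
    (d : 'I_(nusers Ku) -> file_idx N) :
  admissible_demand d -> #|[pred k | P (tag (d k))]| = (\sum_(i | P i) Ku i)%N.
Proof.
move=> adm_d; rewrite -sum1_card (partition_big (fun k => tag (d k)) P) //=.
apply: eq_bigr => i Pi; rewrite -(adm_d i) -sum1_card; apply: eq_bigl => k.
by rewrite !inE /=; case: eqP => [->|]; rewrite ?Pi ?andbF.
Qed.

(** * Coded placement and delivery *)

Section CodedCaching.

Variables (L : nat) (N : 'I_L -> nat) (uncoded : pred 'I_L) (F K t a1 a2 : nat).

Local Notation label := ({set 'I_K} * 'I_(a1 + a2).+1)%type.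

(* A file is cut into the pieces [(S, j)] with [j < copies t a1 a2 #|S|]; the
   pieces are enumerated, and piece number [r] carries bit [r] of the file
   ([false] when [F <= r]). *)
Definition is_piece : pred label := fun p => (p.2 < copies t a1 a2 #|p.1|)%N.

Definition piece_bit (W : library N F) (f : file_idx N) (p : label) : bool :=
  nth false (W f) (index p (enum is_piece)).

Definition cached_by (k : 'I_K) : pred (file_idx N * label) :=
  fun q => [&& ~~ uncoded (tag q.1), k \in q.2.1 & is_piece q.2].

Definition placement (c : nat) (k : 'I_K) (W : library N F) : c.-tuple bool :=
  pad_tuple c [seq piece_bit W q.1 q.2 | q <- enum (cached_by k)].

Variable d : 'I_K -> file_idx N.

Definition coded_bit (W : library N F) (U : {set 'I_K}) (j : 'I_(a1 + a2).+1) : bool :=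
  \big[addb/false]_(k in U | ~~ uncoded (tag (d k))) piece_bit W (d k) (U :\ k, j).

(* The coded slot [(U, j)] carries the XOR of the pieces [(U :\ k, j)], so its
   set is one larger than a piece label: hence [copies t.+1]. *)
Definition slots : seq ('I_K * 'I_F + label) :=
  [seq inl q | q <- enum [pred q : 'I_K * 'I_F | uncoded (tag (d q.1))]] ++
  [seq inr p | p <- enum [pred p : label | (p.2 < copies t.+1 a1 a2 #|p.1|)%N]].

Definition slot_bit (W : library N F) (z : 'I_K * 'I_F + label) : bool :=
  match z with
  | inl q => nth false (W (d q.1)) q.2
  | inr p => coded_bit W p.1 p.2
  end.

Definition delivery (b : nat) (W : library N F) : b.-tuple bool :=
  pad_tuple b [seq slot_bit W z | z <- slots].

Lemma piece_bit_decodable k (W W' : library N F) (p : label) :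
  {in slots, slot_bit W =1 slot_bit W'} ->
  {in enum (cached_by k), forall q, piece_bit W q.1 q.2 = piece_bit W' q.1 q.2} ->
  ~~ uncoded (tag (d k)) -> is_piece p ->
  piece_bit W (d k) p = piece_bit W' (d k) p.
Proof.
move=> same_slots same_cache coded_k; case: p => S j piece_Sj.
have cached q : q \in enum (cached_by k) <-> [/\ ~~ uncoded (tag q.1), k \in q.2.1 & is_piece q.2].
  by rewrite mem_enum unfold_in; split => /and3P.
have [kS|kNS] := boolP (k \in S).
  by apply: (same_cache (d k, (S, j))); apply/cached.
(* Otherwise (S, j) is the summand of d k in the XOR sent for U = k |: S, and
   user k caches every other summand. *)
pose U := k |: S.
have card_U : #|U| = #|S|.+1 by rewrite cardsU1 kNS.
have slot_U : inr (U, j) \in slots.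
  by rewrite mem_cat (mem_map inr_inj) mem_enum inE /= card_U; apply/orP; right.
have := same_slots _ slot_U; rewrite /= /coded_bit.
rewrite !(bigD1 k (P := fun x => (x \in U) && ~~ uncoded (tag (d x)))) ?setU11 //=.
rewrite setU1K // (eq_bigr (fun k' => piece_bit W' (d k') (U :\ k', j))) => [/addIb //|].
move=> k' /andP[/andP[k'U coded_k'] k'k].
apply: (same_cache (d k', (U :\ k', j))); apply/cached; split => //=.
  by rewrite !inE eq_sym k'k eqxx.
by rewrite /is_piece /=; move: (cardsD1 k' U); rewrite k'U card_U add1n => -[<-].
Qed.

Lemma file_decodable c b k (W W' : library N F) :
  (F <= #|is_piece|)%N -> (size (enum (cached_by k)) <= c)%N -> (size slots <= b)%N ->
  delivery b W = delivery b W' -> placement c k W = placement c k W' ->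
  W (d k) = W' (d k).
Proof.
move=> le_F le_c le_b /(pad_tuple_map_inj le_b) same_slots.
move=> /(pad_tuple_map_inj le_c) same_cache.
apply: eq_from_tnth => i; rewrite !(tnth_nth false).
have [uncoded_k|coded_k] := boolP (uncoded (tag (d k))).
  by apply: (same_slots (inl (k, i))); rewrite mem_cat map_f // mem_enum.
have lt_i : (i < size (enum is_piece))%N by rewrite -cardE (leq_trans _ le_F).
pose p := nth (set0, ord0) (enum is_piece) i.
have rank_p : index p (enum is_piece) = i by rewrite index_uniq ?enum_uniq.
have piece_p : p \in is_piece by rewrite -mem_enum mem_nth.
by have := piece_bit_decodable same_slots same_cache coded_k piece_p; rewrite /piece_bit rank_p.
Qed.

Lemma card_is_piece : #|is_piece| = (a1 * 'C(K, t) + a2 * 'C(K, t.+1))%N.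
Proof. exact: card_pieces (leqnSn _). Qed.

Lemma size_cached_by k :
  size (enum (cached_by k)) = ((\sum_(i | ~~ uncoded i) N i) *
    (a1 * ('C(K, t) - 'C(K.-1, t)) + a2 * ('C(K, t.+1) - 'C(K.-1, t.+1))))%N.
Proof.
rewrite -cardE (eq_card (B := [predX [pred f : file_idx N | ~~ uncoded (tag f)] &
   [pred p : label | (k \in p.1) && (p.2 < copies t a1 a2 #|p.1|)%N]])); last first.
  by move=> q; rewrite !inE unfold_in /cached_by andbA.
rewrite cardX (card_files_of_levels N (fun i => ~~ uncoded i)).
rewrite (card_labels (h := copies t a1 a2) (fun S : {set 'I_K} => k \in S)) ?sum_copies;
  last by move=> s; apply/leqW/copies_le.
by rewrite !card_sets_of_size_mem.
Qed.

Lemma size_slots :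
  size slots = (#|[pred k | uncoded (tag (d k))]| * F
                + (a1 * 'C(K, t.+1) + a2 * 'C(K, t.+2)))%N.
Proof.
rewrite size_cat !size_map -!cardE; congr addn.
  rewrite (eq_card (B := [predX [pred k | uncoded (tag (d k))] & predT])); last first.
    by move=> q; rewrite !inE andbT.
  by rewrite cardX card_ord.
exact: card_pieces (leqnSn _).
Qed.

End CodedCaching.

Local Open Scope ring_scope.

Lemma exists_exact_decoder (R : realType) (L : nat) (N Ku : 'I_L -> nat)
    (F c b : nat) (d : 'I_(nusers Ku) -> file_idx N)
    (cache : 'I_(nusers Ku) -> library N F -> c.-tuple bool)
    (enc : library N F -> b.-tuple bool) (eps : R) :
  0 <= eps ->
  (forall k W W', enc W = enc W' -> cache k W = cache k W' -> W (d k) = W' (d k)) ->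
  exists dec, error_prob R d cache enc dec <= eps.
Proof.
move=> eps_ge0 decodable.
exists (fun k y z => if [pick W | (enc W == y) && (cache k W == z)] is Some W
                    then W (d k) else [tuple false | _ < F]).
rewrite /error_prob eq_card0 ?mul0r // => W /=; apply/negbTE/existsPn => k.
case: pickP => [W0 /andP[/eqP enc_W0 /eqP cache_W0]|/(_ W)]; last by rewrite !eqxx.
by rewrite (decodable k W0 W enc_W0 cache_W0) eqxx.
Qed.

(** * Memory sharing *)

(* The chord of the Maddah-Ali--Niesen rates (K - s) / (s + 1) between s = t
   and s = t + 1 lies below the curve K / s - 1. *)
Lemma memory_sharing_rate_le (R : realFieldType) (K t u : R) :
  0 <= u -> u < 1 -> 0 <= t -> t + 1 <= K -> 0 < t + u ->
  (1 - u) * ((K - t) / (t + 1)) + u * ((K - t - 1) / (t + 2)) <= K / (t + u) - 1.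
Proof.
move=> u_ge0 u_lt1 t_ge0 tK tu_gt0.
rewrite -subr_ge0.
have -> : K / (t + u) - 1 - ((1 - u) * ((K - t) / (t + 1)) + u * ((K - t - 1) / (t + 2)))
   = ((t + 1) * (K - t - 1) + (K + 1) * ((1 - u) * (1 - u)))
     / ((t + u) * (t + 1) * (t + 2)).
  by field; rewrite !gt_eqF //; lra.
by apply: divr_ge0; [apply: addr_ge0; apply: mulr_ge0; nra | apply: mulr_ge0; nra].
Qed.

Lemma div_sub_le (R : realFieldType) (K x e : R) :
  0 <= K -> 1 <= x -> 0 <= e <= 1 / 2 -> K / (x - e) <= K / x + 2 * K * e.
Proof.
move=> K_ge0 x_ge1 /andP[e_ge0 e_le].
rewrite -subr_ge0.
have -> : K / x + 2 * K * e - K / (x - e) = K * e * (2 * (x * (x - e)) - 1) / (x * (x - e)).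
  by field; rewrite !gt_eqF //; lra.
by apply: divr_ge0; [apply: mulr_ge0; [apply: mulr_ge0|] | apply: mulr_ge0]; nra.
Qed.

Lemma bin_succ_ratio (R : numFieldType) (K s : nat) : (s <= K)%N ->
  'C(K, s.+1)%:R = (K%:R - s%:R) / (s%:R + 1) * 'C(K, s)%:R :> R.
Proof.
move=> le_sK; have s1_neq0 : s%:R + 1 != 0 :> R by rewrite natr1 pnatr_eq0.
have := congr1 (fun n => n%:R : R) (mul_bin_left K s).
rewrite /= !natrM natrB // -natr1 => bin_rec.
by apply: (mulfI s1_neq0); rewrite bin_rec; field.
Qed.

Lemma coded_load_le (R : realFieldType) (K t u F y1 y2 n1 n2 : R) :
  0 <= u -> u < 1 -> 0 <= t -> t + 1 <= K -> 0 < t + u ->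
  0 <= F -> 0 <= n1 -> 0 <= n2 -> y1 + y2 <= F + n1 -> u * F - n2 <= y2 ->
  (K - t) / (t + 1) * y1 + (K - t - 1) / (t + 2) * y2
    <= (K / (t + u) - 1) * F + K * (n1 + n2).
Proof.
move=> u_ge0 u_lt1 t_ge0 tK tu_gt0 F_ge0 n1_ge0 n2_ge0 y_le y2_ge.
have chord := memory_sharing_rate_le u_ge0 u_lt1 t_ge0 tK tu_gt0.
set g1 := (K - t) / (t + 1) in chord *; set g2 := (K - t - 1) / (t + 2) in chord *.
have g2_ge0 : 0 <= g2 by apply: divr_ge0; lra.
have g2_le_g1 : g2 <= g1.
  rewrite -subr_ge0 (_ : g1 - g2 = (K + 1) / ((t + 1) * (t + 2))).
    by apply: divr_ge0; [lra | apply: mulr_ge0; lra].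
  by rewrite /g1 /g2; field; apply/andP; split; rewrite gt_eqF //; lra.
have g1_le_K : g1 <= K.
  rewrite -subr_ge0 (_ : K - g1 = t * (K + 1) / (t + 1)).
    by apply: divr_ge0; [apply: mulr_ge0 | ]; lra.
  by rewrite /g1; field; rewrite gt_eqF //; lra.
(* Write g1 y1 + g2 y2 = g1 (y1 + y2) - (g1 - g2) y2 with g1 >= g2, then bound
   y1 + y2 from above and y2 from below. *)
have tot_le : g1 * (y1 + y2) <= g1 * (F + n1) by apply: ler_wpM2l; lra.
have y2_term : (g1 - g2) * (u * F - n2) <= (g1 - g2) * y2 by apply: ler_wpM2l; lra.
have chord_F : F * ((1 - u) * g1 + u * g2) <= F * (K / (t + u) - 1) by apply: ler_wpM2l.
have n1_term : g1 * n1 <= K * n1 by apply: ler_wpM2r.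
have n2_term : (g1 - g2) * n2 <= K * n2 by apply: ler_wpM2r; lra.
move: tot_le y2_term chord_F n1_term n2_term; clearbody g1 g2.
by move: (K / (t + u)) => r; lra.
Qed.

Lemma exists_cover_split (R : archiRealFieldType) (n1 n2 F : nat) (u : R) :
  (0 < n1)%N -> (0 < n2)%N -> 0 <= u <= 1 ->
  exists a1 a2 : nat,
    [/\ (F <= a1 * n1 + a2 * n2)%N, (a1 * n1 + a2 * n2 <= F + n1)%N,
        (a2 * n2)%:R <= u * F%:R & u * F%:R - n2%:R <= (a2 * n2)%:R].
Proof.
move=> n1_gt0 n2_gt0 /andP[u_ge0 u_le1].
have n2r_gt0 : 0 < n2%:R :> R by rewrite ltr0n.
have uF_ge0 : 0 <= u * F%:R / n2%:R by rewrite divr_ge0 ?mulr_ge0.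
have /andP[] := truncn_itv uF_ge0; set a2 := Num.truncn _ => a2_le a2_gt.
have y2_le : (a2 * n2)%:R <= u * F%:R by rewrite natrM -ler_pdivlMr.
have y2_gt : u * F%:R < (a2 * n2 + n2)%:R.
  by rewrite -mulSnr natrM -ltr_pdivrMr.
have y2_le_F : (a2 * n2 <= F)%N.
  by rewrite -(ler_nat R) (le_trans y2_le) // ler_piMl.
exists ((F - a2 * n2) %/ n1).+1, a2; split => //.
- by rewrite -{1}(subnK y2_le_F) leq_add2r ltnW // ltn_ceil.
- rewrite mulSn -addnA addnC leq_add2r -[F in (_ <= F)%N](subnK y2_le_F) leq_add2r.
  exact: leq_divM.
- by move: y2_gt; rewrite natrD; lra.
Qed.

Lemma exists_rounded_sharing (R : archiRealFieldType) (K t F : nat) (u : R) :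
  (t < K)%N -> 0 <= u -> u < 1 -> 0 < t%:R + u ->
  exists a1 a2 : nat,
    [/\ (F <= a1 * 'C(K, t) + a2 * 'C(K, t.+1))%N,
        t%:R * (a1 * 'C(K, t))%:R + t.+1%:R * (a2 * 'C(K, t.+1))%:R
          <= (t%:R + u) * F%:R + K%:R * ('C(K, t) + 'C(K, t.+1))%:R &
        (a1 * 'C(K, t.+1) + a2 * 'C(K, t.+2))%:R
          <= (K%:R / (t%:R + u) - 1) * F%:R + K%:R * ('C(K, t) + 'C(K, t.+1))%:R].
Proof.
move=> t_ltK u_ge0 u_lt1 tu_gt0.
set n1 := 'C(K, t); set n2 := 'C(K, t.+1).
have n1_gt0 : (0 < n1)%N by rewrite bin_gt0 ltnW.
have n2_gt0 : (0 < n2)%N by rewrite bin_gt0.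
have u_itv : 0 <= u <= 1 by rewrite u_ge0 ltW.
have [a1 [a2 [cover y_le y2_le y2_ge]]] := exists_cover_split F n1_gt0 n2_gt0 u_itv.
have yr_le : (a1 * n1)%:R + (a2 * n2)%:R <= F%:R + n1%:R :> R by rewrite -!natrD ler_nat.
have t_ge0 : 0 <= t%:R :> R by exact: ler0n.
exists a1, a2; split => //.
- have tn1_le : t%:R * n1%:R <= K%:R * (n1 + n2)%:R :> R.
    by rewrite ler_pM ?ler0n // ler_nat ?leq_addr // ltnW.
  have := ler_wpM2l t_ge0 yr_le.
  by rewrite -natr1; lra.
- have load1 : (a1 * 'C(K, t.+1))%:R = (K%:R - t%:R) / (t%:R + 1) * (a1 * n1)%:R :> R.
    by rewrite !natrM bin_succ_ratio 1?ltnW // mulrCA.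
  have load2 : (a2 * 'C(K, t.+2))%:R = (K%:R - t%:R - 1) / (t%:R + 2) * (a2 * n2)%:R :> R.
    by rewrite !natrM bin_succ_ratio // mulrCA -natr1; congr (_ / _ * _); ring.
  have t1_le_K : t%:R + 1 <= K%:R :> R by rewrite natr1 ler_nat.
  rewrite !natrD load1 load2.
  exact: coded_load_le u_ge0 u_lt1 t_ge0 t1_le_K tu_gt0 (ler0n R F) (ler0n R n1) (ler0n R n2) yr_le y2_ge.
Qed.

Lemma exists_coded_sharing (R : archiRealFieldType) (K : nat) (x eps : R) :
  1 <= x -> x < K%:R -> 0 < eps ->
  exists F0 : nat, forall F, (F0 <= F)%N -> exists t a1 a2 : nat,
    [/\ (F <= a1 * 'C(K, t) + a2 * 'C(K, t.+1))%N,
        t%:R * (a1 * 'C(K, t))%:R + t.+1%:R * (a2 * 'C(K, t.+1))%:R <= x * F%:R &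
        (a1 * 'C(K, t.+1) + a2 * 'C(K, t.+2))%:R <= (K%:R / x - 1 + eps) * F%:R].
Proof.
move=> x_ge1 x_ltK eps_gt0.
have K_gt1 : 1 < K%:R :> R by apply: le_lt_trans x_ltK.
pose e := Num.min (1 / 2) (eps / (3 * K%:R)).
have e_gt0 : 0 < e by rewrite lt_min; apply/andP; split; [lra | apply: divr_gt0; lra].
have e_le : e <= 1 / 2 by rewrite ge_min lexx.
have e_eps : 3 * K%:R * e <= eps.
  by rewrite mulrC -ler_pdivlMr ?ge_min ?lexx ?orbT //; lra.
have z_ge0 : 0 <= x - e by lra.
have /andP[] := truncn_itv z_ge0; set t := Num.truncn _ => t_le_z z_lt_t1.
have t_ltK : (t < K)%N by rewrite -(ltr_nat R); apply: le_lt_trans t_le_z _; lra.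
have u_ge0 : 0 <= x - e - t%:R by rewrite subr_ge0.
have u_lt1 : x - e - t%:R < 1 by move: z_lt_t1; rewrite -natr1; lra.
have tu_eq : t%:R + (x - e - t%:R) = x - e by ring.
have tu_gt0 : 0 < t%:R + (x - e - t%:R) by rewrite tu_eq; lra.
pose slack : R := K%:R * ('C(K, t) + 'C(K, t.+1))%:R.
exists (Num.truncn (slack / e)).+1 => F F_large.
have slack_le : slack <= e * F%:R.
  have slack_ge0 : 0 <= slack / e by rewrite divr_ge0 ?mulr_ge0 ?ler0n ?ltW.
  by move: F_large; rewrite truncn_lt_nat // ltr_pdivrMr // => /ltW; rewrite [e * _]mulrC.
have [a1 [a2 []]] := exists_rounded_sharing F t_ltK u_ge0 u_lt1 tu_gt0.
rewrite tu_eq -/slack => cover cache load; exists t, a1, a2; split => //; first lra.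
have F_ge0 : 0 <= F%:R :> R by exact: ler0n.
have e_itv : 0 <= e <= 1 / 2 by rewrite ltW.
have := ler_wpM2r F_ge0 (div_sub_le (ltW (lt_trans ltr01 K_gt1)) x_ge1 e_itv).
have e_le_Ke : 1 * e <= K%:R * e by apply: ler_wpM2r; apply: ltW.
have : (2 * K%:R * e + e) * F%:R <= eps * F%:R by apply: ler_wpM2r => //; lra.
lra.
Qed.

Lemma exists_sharing (R : archiRealFieldType) (K T : nat) (M eps : R) :
  0 <= M -> 0 < eps -> T%:R <= M * K%:R ->
  exists F0 : nat, forall F, (F0 <= F)%N -> exists t a1 a2 : nat,
    [/\ (F <= a1 * 'C(K, t) + a2 * 'C(K, t.+1))%N,
        (T * (a1 * ('C(K, t) - 'C(K.-1, t)) + a2 * ('C(K, t.+1) - 'C(K.-1, t.+1))))%:R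
          <= M * F%:R &
        (a1 * 'C(K, t.+1) + a2 * 'C(K, t.+2))%:R
          <= (Num.max (T%:R / M - 1) 0 + eps) * F%:R].
Proof.
move=> M_ge0 eps_gt0 T_le_MK.
have max_ge0 : 0 <= Num.max (T%:R / M - 1) 0 by rewrite le_max lexx orbT.
have [T_le_M | M_lt_T] := lerP T%:R M.
  exists 0%N => F _; exists K, F, 0%N; split.
  - by rewrite binn muln1 mul0n addn0.
  - rewrite mul0n addn0 binn (le_trans _ (ler_wpM2r (ler0n R F) T_le_M)) // -natrM.
    by rewrite ler_nat leq_mul // mulnBr muln1 leq_subr.
  - by rewrite bin_small // mul0n muln0 addn0 mulr_ge0 ?ler0n //; lra.
have M_gt0 : 0 < M.
  by rewrite lt_def M_ge0 andbT; apply/eqP => M0; move: T_le_MK M_lt_T; rewrite M0 mul0r; lra.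
have T_gt0 : 0 < T%:R :> R by apply: le_lt_trans M_lt_T.
have K_gt0 : 0 < K%:R :> R by rewrite -(pmulr_rgt0 _ M_gt0); apply: lt_le_trans T_le_MK.
pose x := K%:R * M / T%:R.
have x_ge1 : 1 <= x by rewrite ler_pdivlMr // mul1r mulrC.
have x_ltK : x < K%:R by rewrite ltr_pdivrMr // ltr_pM2l.
have TM_eq : T%:R / M = K%:R / x by rewrite /x; field; rewrite !gt_eqF.
have [F0 sharing] := exists_coded_sharing x_ge1 x_ltK eps_gt0.
exists F0 => F /sharing[t [a1 [a2 [cover cache load]]]]; exists t, a1, a2; split => //.
- have count : (K * (a1 * ('C(K, t) - 'C(K.-1, t)) + a2 * ('C(K, t.+1) - 'C(K.-1, t.+1)))
      = t * (a1 * 'C(K, t)) + t.+1 * (a2 * 'C(K, t.+1)))%N.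
    by rewrite mulnDr !(mulnCA K) !mul_bin_sub_pred !(mulnCA a1) !(mulnCA a2).
  have lhs_eq : K%:R * (T * (a1 * ('C(K, t) - 'C(K.-1, t))
                              + a2 * ('C(K, t.+1) - 'C(K.-1, t.+1))))%:R
      = T%:R * (t%:R * (a1 * 'C(K, t))%:R + t.+1%:R * (a2 * 'C(K, t.+1))%:R) :> R.
    by rewrite -!natrM -natrD -natrM mulnCA count.
  have rhs_eq : K%:R * (M * F%:R) = T%:R * (x * F%:R).
    by rewrite /x; field; rewrite gt_eqF.
  by rewrite -(ler_pM2l K_gt0) lhs_eq rhs_eq ler_wpM2l ?ler0n.
- rewrite TM_eq; apply: le_trans load _; apply: ler_wpM2r; first exact: ler0n.
  by rewrite lerD2r le_max lexx.
Qed.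

Lemma cached_files_le (R : realFieldType) (L : nat) (N Ku : 'I_L -> nat) (M : R) :
  (forall i, (0 < Ku i)%N) -> 0 <= M ->
  (\sum_(i | ~~ (M < (N i)%:R / (Ku i)%:R)) N i)%:R <= M * (nusers Ku)%:R.
Proof.
move=> Ku_gt0 M_ge0; rewrite /nusers !natr_sum mulr_sumr.
rewrite [X in _ <= X](bigID (fun i => ~~ (M < (N i)%:R / (Ku i)%:R))) /=.
rewrite -[X in X <= _]addr0 lerD //; last by apply: sumr_ge0 => i _; rewrite mulr_ge0 ?ler0n.
by apply: ler_sum => i; rewrite -leNgt ler_pdivrMr ?ltr0n // mulrC.
Qed.

Theorem theorem3 (R : realType) (L : nat) (N Ku : 'I_L -> nat) (M : R) :
  (forall i : 'I_L, (0 < Ku i)%N) ->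
  (forall i : 'I_L, (Ku i <= N i)%N) ->
  0 <= M ->
  achievable N Ku M (R_SU N Ku M).
Proof.
move=> Ku_gt0 _ M_ge0 eps eps_gt0.
pose uncoded : pred 'I_L := fun h => M < (N h)%:R / (Ku h)%:R.
have [F0 sharing] := exists_sharing M_ge0 eps_gt0 (cached_files_le N Ku_gt0 M_ge0).
exists F0 => F /sharing[t [a1 [a2 [cover cache_le load_le]]]].
set c := Num.truncn (M * F%:R).
exists (placement uncoded t a1 a2 c) => d d_adm.
set b := Num.truncn _.
have le_F : (F <= #|@is_piece (nusers Ku) t a1 a2|)%N by rewrite card_is_piece.
have le_c k : (size (enum (@cached_by L N uncoded (nusers Ku) t a1 a2 k)) <= c)%N.
  by rewrite size_cached_by truncn_ge_nat ?mulr_ge0 ?ler0n.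
have le_b : (size (@slots L N uncoded F (nusers Ku) t a1 a2 d) <= b)%N.
  rewrite size_slots card_demanders // /b /R_SU -!natr_sum truncn_ge_nat; last first.
    by rewrite mulr_ge0 ?ler0n // !addr_ge0 ?ler0n ?le_max ?lexx ?orbT // ltW.
  by rewrite natrD natrM -addrA mulrDl lerD.
have [dec dec_ok] := exists_exact_decoder (ltW eps_gt0)
  (fun k W W' => file_decodable le_F (le_c k) le_b).
by exists (delivery uncoded t a1 a2 d b), dec.
Qed.
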